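(* Let $M\ge 1$ be an integer, $\Delta x>0$, and consider the cells $C_j=[x_{j-\frac12},x_{j+\frac12}]$ with centers $x_j=j\Delta x$, $j\in\{-M,\dots,M\}$. Let $H:[0,\infty)\to\mathbb{R}$ be differentiable, let $V:\mathbb{R}\to\mathbb{R}$, and let $(W_k)_{k\in\{-2M,\dots,2M\}}$ be real numbers (approximations of the interaction potential $W$). Suppose the cell averages $\overline\rho_j\ge 0$, $j\in\{-M,\dots,M\}$, are given at time $t$, and define: \begin{itemize} \item slopes $(\rho_x)_j\in\mathbb{R}$ and point values $\rho_j^{\rm E}=\overline\rho_j+\frac{\Delta x}{2}(\rho_x)_j$, $\rho_j^{\rm W}=\overline\rho_j-\frac{\Delta x}{2}(\rho_x)_j$, where the slopes are chosen so that $\rho_j^{\rm E}\ge0$ and $\rho_j^{\rm W}\ge0$ for all $j$ (a positivity preserving piecewise linear reconstruction); \item $\xi_j=\Delta x\sum_{i=-M}^{M}W_{j-i}\overline\rho_i+H'(\overline\rho_j)+V(x_j)$; \item $u_{j+\frac12}=-\frac{\xi_{j+1}-\xi_j}{\Delta x}$, $u_{j+\frac12}^+=\max(u_{j+\frac12},0)$, $u_{j+\frac12}^-=\min(u_{j+\frac12},0)$ for $j=-M,\dots,M-1$; \item fluxes $F_{j+\frac12}=u_{j+\frac12}^+\rho_j^{\rm E}+u_{j+\frac12}^-\rho_{j+1}^{\rm W}$ for $j=-M,\dots,M-1$, and $F_{-M-\frac12}=F_{M+\frac12}=0$. \end{itemize} Let $\Delta t>0$ and define the forward Euler update $\overline\rho_j(t+\Delta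 t)=\overline\rho_j-\frac{\Delta t}{\Delta x}\big(F_{j+\frac12}-F_{j-\frac12}\big)$. If \[ \Delta t\le\frac{\Delta x}{2a},\qquad a=\max_{j}\big\{u_{j+\frac12}^+,\,-u_{j+\frac12}^-\big\}, \] then $\overline\rho_j(t+\Delta t)\ge0$ for all $j$. Consequently, starting from nonnegative initial cell averages and choosing every time step according to this CFL condition (computed from the current values), all computed cell averages remain nonnegative.
   Context: This is the one-dimensional semi-discrete finite-volume scheme $\frac{d\overline\rho_j}{dt}=-\frac{F_{j+\frac12}-F_{j-\frac12}}{\Delta x}$ for the equation $\rho_t=\partial_x\big[\rho\,\partial_x\big(H'(\rho)+V(x)+W*\rho\big)\big]$ with $\rho_0\ge0$, discretized in time by the forward Euler method. In the paper the slopes are first taken as centered differences $(\overline\rho_{j+1}-\overline\rho_{j-1})/(2\Delta x)$ and, if a point value becomes negative, recomputed with the generalized minmod limiter; this is one example of a positivity preserving reconstruction. *)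

From Stdlib Require Import Reals Lra ZArith List.
Open Scope R_scope.

Definition in_cells (M : nat) (j : Z) : Prop :=
  (- Z.of_nat M <= j <= Z.of_nat M)%Z.

(* H : [0,oo) -> R is differentiable with derivative Hd (one-sided at 0):
   only values H r with r >= 0 are used. *)
Definition deriv_nonneg (H Hd : R -> R) : Prop :=
  forall r, 0 <= r -> forall eps, 0 < eps -> exists delta, 0 < delta /\
    forall h, h <> 0 -> 0 <= r + h -> Rabs h < delta ->
      Rabs ((H (r + h) - H r) / h - Hd r) < eps.

Definition xc (dx : R) (j : Z) : R := IZR j * dx.

Definition rhoE (dx : R) (rho s : Z -> R) (j : Z) : R := rho j + dx / 2 * s j.
Definition rhoW (dx : R) (rho s : Z -> R) (j : Z) : R := rho j - dx / 2 * s j.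

Definition conv (M : nat) (dx : R) (W rho : Z -> R) (j : Z) : R :=
  dx * sum_f_R0 (fun k => W (j - (Z.of_nat k - Z.of_nat M))%Z
                          * rho (Z.of_nat k - Z.of_nat M)%Z) (2 * M).

Definition xi (M : nat) (dx : R) (Hd V : R -> R) (W rho : Z -> R) (j : Z) : R :=
  conv M dx W rho j + Hd (rho j) + V (xc dx j).

Definition uface (M : nat) (dx : R) (Hd V : R -> R) (W rho : Z -> R) (j : Z) : R :=
  - (xi M dx Hd V W rho (j + 1) - xi M dx Hd V W rho j) / dx.

(* F_{j+1/2}; zero outside j = -M..M-1, in particular F_{-M-1/2} = F_{M+1/2} = 0 *)
Definition flux (M : nat) (dx : R) (Hd V : R -> R) (W rho s : Z -> R) (j : Z) : R :=
  if (Z.leb (- Z.of_nat M) j && Z.ltb j (Z.of_nat M))%bool then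
    Rmax (uface M dx Hd V W rho j) 0 * rhoE dx rho s j
    + Rmin (uface M dx Hd V W rho j) 0 * rhoW dx rho s (j + 1)
  else 0.

Definition euler (M : nat) (dx : R) (Hd V : R -> R) (W rho s : Z -> R) (dt : R)
  (j : Z) : R :=
  rho j - dt / dx * (flux M dx Hd V W rho s j - flux M dx Hd V W rho s (j - 1)).

Definition amax (M : nat) (dx : R) (Hd V : R -> R) (W rho : Z -> R) : R :=
  fold_right Rmax 0
    (map (fun k => let j := (Z.of_nat k - Z.of_nat M)%Z in
                   Rmax (Rmax (uface M dx Hd V W rho j) 0)
                        (- Rmin (uface M dx Hd V W rho j) 0))
         (seq 0 (2 * M))).

(* Writing [lam = dt/dx], the update is
     euler_j = rhoE_j/2 + rhoW_j/2 - lam F_{j+1/2} + lam F_{j-1/2}.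
   Under the CFL condition [2 lam a <= 1] the upwind structure of the flux gives
   [lam F_{j+1/2} <= rhoE_j/2] (the outgoing part only draws on rhoE_j) and
   [lam F_{j-1/2} >= - rhoW_j/2] (the incoming part only draws on rhoW_j), so the
   update is nonnegative; the iterated statement follows by induction on the step. *)
From Stdlib Require Import Reals Lra ZArith List Lia.
Open Scope R_scope.

Lemma fold_right_Rmax_ge (l : list R) (x : R) : In x l -> x <= fold_right Rmax 0 l.
Proof.
  induction l as [|y l IH]; simpl; [tauto|].
  intros [<-|Hx]; [apply Rmax_l|].
  eapply Rle_trans; [apply IH, Hx|apply Rmax_r].
Qed.

Lemma amax_ge_face_speeds M dx Hd V W rho j :
  (- Z.of_nat M <= j < Z.of_nat M)%Z ->
  Rmax (uface M dx Hd V W rho j) 0 <= amax M dx Hd V W rho /\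
  - Rmin (uface M dx Hd V W rho j) 0 <= amax M dx Hd V W rho.
Proof.
  intros Hj.
  set (u := uface M dx Hd V W rho j).
  assert (Hin : Rmax (Rmax u 0) (- Rmin u 0) <= amax M dx Hd V W rho).
  { apply fold_right_Rmax_ge, in_map_iff.
    exists (Z.to_nat (j + Z.of_nat M)); split.
    - replace (Z.of_nat (Z.to_nat (j + Z.of_nat M)) - Z.of_nat M)%Z with j by lia.
      reflexivity.
    - apply in_seq; lia. }
  split; (eapply Rle_trans; [|exact Hin]); [apply Rmax_l|apply Rmax_r].
Qed.

Lemma CFL_ratio (a dt dx : R) :
  0 < dx -> 2 * a * dt <= dx -> 2 * (dt / dx) * a <= 1.
Proof.
  intros Hdx Hcfl.
  replace (2 * (dt / dx) * a) with (2 * a * dt * / dx) by (field; lra).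
  replace 1 with (dx * / dx) by (field; lra).
  apply Rmult_le_compat_r; [apply Rlt_le, Rinv_0_lt_compat|]; lra.
Qed.

Lemma upwind_flux_le (lam a u pE pW : R) :
  0 <= lam -> 2 * lam * a <= 1 -> Rmax u 0 <= a -> 0 <= pE -> 0 <= pW ->
  lam * (Rmax u 0 * pE + Rmin u 0 * pW) <= pE / 2.
Proof.
  intros Hlam Hcfl Ha HE HW.
  assert (Hp : 0 <= Rmax u 0) by apply Rmax_r.
  assert (Hm : Rmin u 0 <= 0) by apply Rmin_r.
  assert (Hout : lam * Rmax u 0 <= 1 / 2) by nra.
  assert (Hin : lam * Rmin u 0 <= 0) by nra.
  nra.
Qed.

Lemma upwind_flux_ge (lam a u pE pW : R) :
  0 <= lam -> 2 * lam * a <= 1 -> - Rmin u 0 <= a -> 0 <= pE -> 0 <= pW ->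
  - (pW / 2) <= lam * (Rmax u 0 * pE + Rmin u 0 * pW).
Proof.
  intros Hlam Hcfl Ha HE HW.
  assert (Hp : 0 <= Rmax u 0) by apply Rmax_r.
  assert (Hm : Rmin u 0 <= 0) by apply Rmin_r.
  assert (Hin : - (lam * Rmin u 0) <= 1 / 2) by nra.
  assert (Hout : 0 <= lam * Rmax u 0) by nra.
  nra.
Qed.

Section OneStep.

Variables (M : nat) (dx : R) (Hd V : R -> R) (W rho s : Z -> R) (lam : R).

Hypothesis point_values_nonneg :
  forall j, in_cells M j -> 0 <= rhoE dx rho s j /\ 0 <= rhoW dx rho s j.
Hypothesis lam_nonneg : 0 <= lam.
Hypothesis lam_CFL : 2 * lam * amax M dx Hd V W rho <= 1.

Lemma scaled_flux_right_le j :
  in_cells M j -> lam * flux M dx Hd V W rho s j <= rhoE dx rho s j / 2.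
Proof.
  intros Hj. destruct (point_values_nonneg j Hj) as [HE _].
  unfold flux.
  destruct ((- Z.of_nat M <=? j)%Z && (j <? Z.of_nat M)%Z)%bool eqn:Hface;
    [|lra].
  apply andb_prop in Hface as [H1 H2].
  apply Z.leb_le in H1; apply Z.ltb_lt in H2.
  destruct (amax_ge_face_speeds M dx Hd V W rho j) as [Ha _]; [lia|].
  destruct (point_values_nonneg (j + 1)) as [_ HW]; [unfold in_cells; lia|].
  exact (upwind_flux_le _ _ _ _ _ lam_nonneg lam_CFL Ha HE HW).
Qed.

Lemma scaled_flux_left_ge j :
  in_cells M j -> - (rhoW dx rho s j / 2) <= lam * flux M dx Hd V W rho s (j - 1).
Proof.
  intros Hj. destruct (point_values_nonneg j Hj) as [_ HW].
  unfold flux.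
  destruct ((- Z.of_nat M <=? j - 1)%Z && (j - 1 <? Z.of_nat M)%Z)%bool eqn:Hface;
    [|lra].
  apply andb_prop in Hface as [H1 H2].
  apply Z.leb_le in H1; apply Z.ltb_lt in H2.
  destruct (amax_ge_face_speeds M dx Hd V W rho (j - 1)) as [_ Ha]; [lia|].
  destruct (point_values_nonneg (j - 1)) as [HE _]; [unfold in_cells; lia|].
  replace (j - 1 + 1)%Z with j by lia.
  exact (upwind_flux_ge _ _ _ _ _ lam_nonneg lam_CFL Ha HE HW).
Qed.

End OneStep.

Lemma euler_nonneg M dx Hd V W rho s dt :
  0 < dx ->
  (forall j, in_cells M j -> 0 <= rhoE dx rho s j /\ 0 <= rhoW dx rho s j) ->
  0 < dt -> 2 * amax M dx Hd V W rho * dt <= dx ->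
  forall j, in_cells M j -> 0 <= euler M dx Hd V W rho s dt j.
Proof.
  intros Hdx Hpos Hdt Hcfl j Hj.
  assert (Hlam : 0 <= dt / dx) by (apply Rlt_le, Rdiv_lt_0_compat; lra).
  pose proof (CFL_ratio _ _ _ Hdx Hcfl) as Hratio.
  pose proof (scaled_flux_right_le M dx Hd V W rho s _ Hpos Hlam Hratio j Hj).
  pose proof (scaled_flux_left_ge M dx Hd V W rho s _ Hpos Hlam Hratio j Hj).
  unfold euler, rhoE, rhoW in *. lra.
Qed.

Theorem theorem2p1 (M : nat) (dx : R) (H Hd V : R -> R) (W : Z -> R) :
  (1 <= M)%nat -> 0 < dx -> deriv_nonneg H Hd ->
  (* one forward Euler step *)
  (forall (rho s : Z -> R) (dt : R),
     (forall j, in_cells M j -> 0 <= rho j) ->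
     (forall j, in_cells M j -> 0 <= rhoE dx rho s j /\ 0 <= rhoW dx rho s j) ->
     0 < dt ->
     2 * amax M dx Hd V W rho * dt <= dx ->
     forall j, in_cells M j -> 0 <= euler M dx Hd V W rho s dt j)
  /\
  (* iterating with the CFL condition at every step *)
  (forall (rho s : nat -> Z -> R) (dt : nat -> R),
     (forall j, in_cells M j -> 0 <= rho O j) ->
     (forall n j, in_cells M j ->
        0 <= rhoE dx (rho n) (s n) j /\ 0 <= rhoW dx (rho n) (s n) j) ->
     (forall n, 0 < dt n) ->
     (forall n, 2 * amax M dx Hd V W (rho n) * dt n <= dx) ->
     (forall n j, in_cells M j ->
        rho (S n) j = euler M dx Hd V W (rho n) (s n) (dt n) j) ->
     forall n j, in_cells M j -> 0 <= rho n j).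
Proof.
  intros _ Hdx _. split.
  - intros rho s dt _. exact (euler_nonneg M dx Hd V W rho s dt Hdx).
  - intros rho s dt Hinit Hpos Hdt Hcfl Hupdate n.
    induction n as [|n _]; [exact Hinit|].
    intros j Hj. rewrite Hupdate by exact Hj.
    exact (euler_nonneg M dx Hd V W (rho n) (s n) (dt n) Hdx (Hpos n) (Hdt n) (Hcfl n) j Hj).
Qed.
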